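(* Let $a>0$, let $\psi\in C^2([0,a])$ with $\psi>0$ on $[0,a]$, let $0<R_1<R_2<a$, let $\beta>0$, set $\overline B:=\max_{[0,a]}\big|(\psi'/\psi)'\big|$, and for $B>\overline B$ let $z_1=z_1(r,B)$ be the solution of $$\Big[\frac{(\psi z)'}{\psi}\Big]'-Bz=0\ \text{ in }[0,R_1),\qquad z(0)=0,\ z'(0)=1,$$ and $z_2=z_2(r,B,\beta)$ the solution of $$\Big[\frac{(\psi z)'}{\psi}\Big]'-Bz=0\ \text{ in }(R_2,a],\qquad z(a)=\beta,\ z'(a)=-1.$$ Then: (i) $z_1>0$ in $(0,R_1)$; (ii) $z_1(\cdot,B)$ is increasing in $[0,R_1)$ for any $B>\overline B$; (iii) $B\mapsto z_1(r,B)$ is increasing on $(\overline B,\infty)$ for any $r\in(0,R_1)$; (iv) $\lim_{B\to\infty}z_1(r,B)=\infty$ for any $r\in(0,R_1)$. Similarly: (i') $z_2>\beta$ in $(R_2,a)$; (ii') $z_2(\cdot,B)$ is decreasing in $(R_2,a)$ for any $B>\overline B$; (iii') $B\mapsto z_2(r,B)$ is increasing on $(\overline B,\infty)$ for any $r\in(R_2,a)$; (iv') $\lim_{B\to\infty}z_2(r,B)=\infty$ for any $r\in(R_2,a)$.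
   Context: The differential equation can be written equivalently as $z''+\frac{\psi'}{\psi}z'+\big[(\psi'/\psi)'-B\big]z=0$. *)

From Stdlib Require Import Reals.
Open Scope R_scope.

(* Derivative of f at x relative to the set D (one-sided at endpoints of an
   interval D, the usual two-sided derivative at interior points). *)
Definition deriv_in (D : R -> Prop) (f : R -> R) (x l : R) : Prop :=
  forall eps, 0 < eps -> exists delta, 0 < delta /\
    forall y, D y -> y <> x -> Rabs (y - x) < delta ->
      Rabs ((f y - f x) / (y - x) - l) < eps.

Definition cont_in (D : R -> Prop) (f : R -> R) (x : R) : Prop :=
  forall eps, 0 < eps -> exists delta, 0 < delta /\
    forall y, D y -> Rabs (y - x) < delta -> Rabs (f y - f x) < eps.

Definition C2_on (D : R -> Prop) (psi dpsi d2psi : R -> R) : Prop :=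
  forall x, D x ->
    deriv_in D psi x (dpsi x) /\ deriv_in D dpsi x (d2psi x) /\ cont_in D d2psi x.

(* z solves  [ (psi z)' / psi ]' - B z = 0  on D:
   psi*z is differentiable on D with derivative w, and w/psi is
   differentiable on D with derivative B z. *)
Definition solves_ode (psi : R -> R) (B : R) (D : R -> Prop) (z : R -> R) : Prop :=
  exists w : R -> R, forall r, D r ->
    deriv_in D (fun t => psi t * z t) r (w r) /\
    deriv_in D (fun t => w t / psi t) r (B * z r).

From Stdlib Require Import Reals Lra.
Open Scope R_scope.

(* With p := (psi z)' - psi' z = psi z', the equation becomes the first-order system
   z' = p / psi, p' = k_B z with k_B := psi (B - (psi'/psi)'), and k_B is positive and
   strictly increasing in B as soon as B > Bbar.  For z1 we have z(0) = 0 and p(0) = psi(0) > 0,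
   and positivity of p and z propagate together, so z1 increases.  For B < B' the Wronskian
   z_B p_B' - z_B' p_B vanishes at 0 and has derivative z_B z_B' (k_B' - k_B) > 0, so
   z_B' / z_B increases; since both start with slope 1, z_B < z_B'.  Finally k_B >= m (B - Bbar)
   with m = min psi, so on a fixed interval p, and then z, grow at least linearly in B.
   The reflection r -> a - r maps the problem for z2 onto one of the same kind, with initial
   value beta instead of 0. *)

(** * Calculus relative to a set *)

Definition diff_quot (f : R -> R) (x : R) : R -> R := fun y => (f y - f x) / (y - x).
Definition punctured (D : R -> Prop) (x : R) : R -> Prop := fun y => D y /\ y <> x.

Lemma cont_in_limit D f x : cont_in D f x <-> limit1_in f D (f x) x.
Proof.
  unfold cont_in, limit1_in, limit_in; simpl; unfold Rdist; split.
  - intros H eps He; destruct (H eps He) as [del [Hdel H']].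
    exists del; split; [lra|]; intros y [Dy Hy]; auto.
  - intros H eps He; destruct (H eps He) as [del [Hdel H']].
    exists del; split; [lra|]; intros y Dy Hy; auto.
Qed.

Lemma deriv_in_limit D f x l :
  deriv_in D f x l <-> limit1_in (diff_quot f x) (punctured D x) l x.
Proof.
  unfold deriv_in, limit1_in, limit_in, diff_quot, punctured; simpl; unfold Rdist; split.
  - intros H eps He; destruct (H eps He) as [del [Hdel H']].
    exists del; split; [lra|]; intros y [[Dy Hne] Hy]; auto.
  - intros H eps He; destruct (H eps He) as [del [Hdel H']].
    exists del; split; [lra|]; intros y Dy Hne Hy; auto.
Qed.

Lemma limit1_in_ext f g D l x :
  (forall y, D y -> f y = g y) -> limit1_in f D l x -> limit1_in g D l x.
Proof.
  unfold limit1_in, limit_in; intros E H eps He; destruct (H eps He) as [del [Hdel H']].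
  exists del; split; auto; intros y [Dy Hy]; rewrite <- E by auto; auto.
Qed.

Lemma deriv_in_subset D E f x l :
  (forall y, E y -> D y) -> deriv_in D f x l -> deriv_in E f x l.
Proof.
  intros HE H eps He; destruct (H eps He) as [del [Hdel H']]; exists del; split; auto.
Qed.

Lemma deriv_in_ext D f g x l :
  D x -> (forall y, D y -> f y = g y) -> deriv_in D f x l -> deriv_in D g x l.
Proof.
  intros Dx E H eps He; destruct (H eps He) as [del [Hdel H']]; exists del; split; auto.
  intros y Dy Hne Hy; rewrite <- (E y Dy), <- (E x Dx); auto.
Qed.

Lemma deriv_in_val D f x l l' : deriv_in D f x l -> l = l' -> deriv_in D f x l'.
Proof. intros H ->; exact H. Qed.

Lemma deriv_in_cont D f x l : D x -> deriv_in D f x l -> cont_in D f x.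
Proof.
  intros Dx H; apply deriv_in_limit in H.
  assert (Hlim : limit1_in (fun y => f x + diff_quot f x y * (y - x)) (punctured D x)
                   (f x + l * (x - x)) x).
  { apply limit_plus; [apply (limit_free (fun _ => f x) _ x)|]. apply limit_mul; auto.
    apply limit_minus; [apply lim_x|apply (limit_free (fun _ => x) _ x)]. }
  replace (f x + l * (x - x)) with (f x) in Hlim by ring.
  intros eps He; destruct (Hlim eps He) as [del [Hdel H']]; exists del; split; [lra|].
  intros y Dy Hy; destruct (Req_dec y x) as [->|Hne].
  - rewrite Rminus_diag, Rabs_R0; lra.
  - specialize (H' y (conj (conj Dy Hne) Hy)); simpl in H'; unfold Rdist, diff_quot in H'.
    replace (f x + (f y - f x) / (y - x) * (y - x)) with (f y) in H' by (field; lra).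
    exact H'.
Qed.

Lemma cont_in_limit_punctured D f x : cont_in D f x -> limit1_in f (punctured D x) (f x) x.
Proof.
  intros H; apply cont_in_limit in H; intros eps He; destruct (H eps He) as [del [Hdel H']].
  exists del; split; auto; intros y [[Dy _] Hy]; auto.
Qed.

Lemma deriv_in_minus D f g x lf lg : deriv_in D f x lf -> deriv_in D g x lg ->
  deriv_in D (fun t => f t - g t) x (lf - lg).
Proof.
  intros Hf Hg; apply deriv_in_limit in Hf, Hg; apply deriv_in_limit.
  eapply limit1_in_ext; [|exact (limit_minus _ _ _ _ _ _ Hf Hg)].
  unfold punctured, diff_quot; intros y [_ Hy]; field; lra.
Qed.

Lemma deriv_in_scal D f x l k : deriv_in D f x l -> deriv_in D (fun t => k * f t) x (k * l).
Proof.
  intros Hf; apply deriv_in_limit in Hf; apply deriv_in_limit.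
  eapply limit1_in_ext; [|exact (limit_mul _ _ _ _ _ _ (limit_free (fun _ => k) _ x x) Hf)].
  unfold punctured, diff_quot; intros y [_ Hy]; field; lra.
Qed.

Lemma deriv_in_mult D f g x lf lg : D x -> deriv_in D f x lf -> deriv_in D g x lg ->
  deriv_in D (fun t => f t * g t) x (lf * g x + f x * lg).
Proof.
  intros Dx Hf Hg.
  assert (Cg := cont_in_limit_punctured _ _ _ (deriv_in_cont _ _ _ _ Dx Hg)).
  apply deriv_in_limit in Hf, Hg; apply deriv_in_limit.
  eapply limit1_in_ext; [|exact (limit_plus _ _ _ _ _ _ (limit_mul _ _ _ _ _ _ Hf Cg)
     (limit_mul _ _ _ _ _ _ (limit_free (fun _ => f x) _ x x) Hg))].
  unfold punctured, diff_quot; intros y [_ Hy]; field; lra.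
Qed.

Lemma deriv_in_inv D f x l : D x -> (forall y, D y -> f y <> 0) -> deriv_in D f x l ->
  deriv_in D (fun t => / f t) x (- l / (f x * f x)).
Proof.
  intros Dx Hnz Hf.
  assert (Cf := cont_in_limit_punctured _ _ _ (deriv_in_cont _ _ _ _ Dx Hf)).
  assert (Hfx := Hnz x Dx).
  apply deriv_in_limit in Hf; apply deriv_in_limit.
  assert (Hi : limit1_in (fun y => / (f y * f x)) (punctured D x) (/ (f x * f x)) x).
  { apply limit_inv; [|apply Rmult_integral_contrapositive; auto].
    apply limit_mul; auto; apply (limit_free (fun _ => f x) _ x). }
  eapply limit1_in_ext; [|exact (limit_mul _ _ _ _ _ _ (limit_Ropp _ _ _ _ Hf) Hi)].
  unfold punctured, diff_quot; intros y [Dy Hy]; assert (f y <> 0) by auto.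
  field; repeat split; auto; lra.
Qed.

Lemma deriv_in_div D f g x lf lg :
  D x -> (forall y, D y -> g y <> 0) -> deriv_in D f x lf -> deriv_in D g x lg ->
  deriv_in D (fun t => f t / g t) x ((lf * g x - f x * lg) / (g x * g x)).
Proof.
  intros Dx Hnz Hf Hg; assert (Hgx := Hnz x Dx).
  eapply deriv_in_val; [exact (deriv_in_mult _ _ _ _ _ _ Dx Hf (deriv_in_inv _ _ _ _ Dx Hnz Hg))|].
  cbv beta; field; auto.
Qed.

Lemma deriv_in_unique c d f x l1 l2 : c < d -> c <= x <= d ->
  deriv_in (fun t => c <= t <= d) f x l1 -> deriv_in (fun t => c <= t <= d) f x l2 -> l1 = l2.
Proof.
  intros Hcd Hx H1 H2; apply deriv_in_limit in H1, H2.
  eapply single_limit; [|exact H1|exact H2].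
  intros alp Ha; set (e := Rmin (alp / 2) ((d - c) / 2)).
  assert (e <= alp / 2) by apply Rmin_l; assert (e <= (d - c) / 2) by apply Rmin_r.
  assert (0 < e) by (apply Rmin_glb_lt; lra).
  unfold punctured, Rdist; destruct (Rle_dec x ((c + d) / 2)).
  - exists (x + e); split; [split; lra|].
    replace (x + e - x) with e by ring; rewrite Rabs_right; lra.
  - exists (x - e); split; [split; lra|].
    replace (x - e - x) with (- e) by ring; rewrite Rabs_Ropp, Rabs_right; lra.
Qed.

Lemma deriv_in_reflect D f a x l :
  deriv_in D f (a - x) l -> deriv_in (fun t => D (a - t)) (fun t => f (a - t)) x (- l).
Proof.
  intros H eps He; destruct (H eps He) as [del [Hdel H']]; exists del; split; auto.
  intros y Dy Hne Hy.
  replace ((f (a - y) - f (a - x)) / (y - x) - - l)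
    with (- ((f (a - y) - f (a - x)) / (a - y - (a - x)) - l)) by (field; lra).
  rewrite Rabs_Ropp; apply H'; auto; [lra|].
  replace (a - y - (a - x)) with (- (y - x)) by ring; rewrite Rabs_Ropp; auto.
Qed.

Lemma deriv_in_le_right D f g c e lf lg : 0 < e -> (forall t, c < t < c + e -> D t) ->
  deriv_in D f c lf -> deriv_in D g c lg ->
  (forall t, c < t < c + e -> f t - f c <= g t - g c) -> lf <= lg.
Proof.
  intros He HD Hf Hg Hfg; apply Rnot_lt_le; intro Hlt.
  destruct (Hf ((lf - lg) / 2) ltac:(lra)) as [df [Hdf Hf']].
  destruct (Hg ((lf - lg) / 2) ltac:(lra)) as [dg [Hdg Hg']].
  set (t := c + Rmin e (Rmin df dg) / 2).
  assert (Rmin e (Rmin df dg) <= e) by apply Rmin_l.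
  assert (Rmin e (Rmin df dg) <= Rmin df dg) by apply Rmin_r.
  assert (Rmin df dg <= df) by apply Rmin_l; assert (Rmin df dg <= dg) by apply Rmin_r.
  assert (0 < Rmin e (Rmin df dg)) by (repeat apply Rmin_glb_lt; lra).
  assert (Ht : c < t < c + e) by (unfold t; lra).
  assert (Hdist : Rabs (t - c) = t - c) by (apply Rabs_right; lra).
  specialize (Hf' t (HD t Ht) ltac:(lra) ltac:(rewrite Hdist; unfold t; lra)).
  specialize (Hg' t (HD t Ht) ltac:(lra) ltac:(rewrite Hdist; unfold t; lra)).
  apply Rabs_def2 in Hf', Hg'.
  assert ((f t - f c) / (t - c) <= (g t - g c) / (t - c)).
  { apply Rmult_le_compat_r; [left; apply Rinv_0_lt_compat; lra|apply Hfg; auto]. }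
  lra.
Qed.

Definition clamp c d x := Rmax c (Rmin d x).

Lemma clamp_in c d x : c <= d -> c <= clamp c d x <= d.
Proof. unfold clamp, Rmax, Rmin; intros; repeat destruct Rle_dec; lra. Qed.

Lemma clamp_id c d x : c <= x <= d -> clamp c d x = x.
Proof. unfold clamp, Rmax, Rmin; intros; repeat destruct Rle_dec; lra. Qed.

Lemma clamp_dist c d x y : c <= d -> c <= x <= d -> Rabs (clamp c d y - x) <= Rabs (y - x).
Proof.
  intros; unfold clamp, Rmax, Rmin, Rabs; repeat destruct Rle_dec; repeat destruct Rcase_abs; lra.
Qed.

Lemma continuity_pt_clamp D f c d x : c <= d -> (forall t, c <= t <= d -> D t) ->
  c <= x <= d -> cont_in D f x -> continuity_pt (fun t => f (clamp c d t)) x.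
Proof.
  intros Hcd HD Hx H eps He; destruct (H eps He) as [del [Hdel H']]; exists del; split; [lra|].
  intros y [_ Hy]; simpl in *; unfold Rdist in *; rewrite (clamp_id c d x Hx).
  apply H'; [apply HD, clamp_in; auto|]. pose proof (clamp_dist c d x y Hcd Hx); lra.
Qed.

Lemma derivable_pt_lim_clamp D f l c d x : (forall t, c <= t <= d -> D t) -> c < x < d ->
  deriv_in D f x l -> derivable_pt_lim (fun t => f (clamp c d t)) x l.
Proof.
  intros HD Hx H eps He; destruct (H eps He) as [del [Hdel H']].
  assert (Hp : 0 < Rmin del (Rmin (x - c) (d - x))) by (repeat apply Rmin_glb_lt; lra).
  exists (mkposreal _ Hp); simpl; intros h Hh Hhd.
  assert (Rmin del (Rmin (x - c) (d - x)) <= del) by apply Rmin_l.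
  assert (Rmin del (Rmin (x - c) (d - x)) <= Rmin (x - c) (d - x)) by apply Rmin_r.
  assert (Rmin (x - c) (d - x) <= x - c) by apply Rmin_l.
  assert (Rmin (x - c) (d - x) <= d - x) by apply Rmin_r.
  assert (- h <= Rabs h /\ h <= Rabs h) by (split; [rewrite <- Rabs_Ropp|]; apply RRle_abs).
  rewrite (clamp_id c d x), (clamp_id c d (x + h)) by lra.
  specialize (H' (x + h)); replace (x + h - x) with h in H' by ring.
  apply H'; [apply HD; lra| |lra]; intro; apply Hh; lra.
Qed.

Lemma mvt_in D f f' c d : c < d -> (forall x, c <= x <= d -> D x) ->
  (forall x, c <= x <= d -> deriv_in D f x (f' x)) ->
  exists xi, c < xi < d /\ f d - f c = f' xi * (d - c).
Proof.
  intros Hcd HD Hder; set (g := fun t => f (clamp c d t)).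
  assert (Hd : forall t, c < t < d -> derivable_pt_lim g t (f' t))
    by (intros t Ht; apply (derivable_pt_lim_clamp D); auto; apply Hder; lra).
  set (pr1 := fun t (H : c < t < d) =>
    exist (fun l => derivable_pt_abs g t l) (f' t) (Hd t H) : derivable_pt g t).
  destruct (MVT g id c d pr1 (fun t _ => derivable_pt_id t) Hcd) as [xi [P HP]].
  - intros t Ht; apply (continuity_pt_clamp D); auto; try lra.
    apply (deriv_in_cont _ _ _ (f' t)); auto.
  - intros t _; apply derivable_continuous_pt, derivable_pt_id.
  - exists xi; split; auto; unfold pr1 in HP; simpl in HP.
    rewrite derive_pt_id in HP; unfold g, id in HP.
    rewrite (clamp_id c d c), (clamp_id c d d) in HP by lra; lra.
Qed.

Lemma mvt_lb D f f' c d k : c < d -> (forall x, c <= x <= d -> D x) ->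
  (forall x, c <= x <= d -> deriv_in D f x (f' x)) -> (forall x, c < x < d -> k <= f' x) ->
  k * (d - c) <= f d - f c.
Proof.
  intros Hcd HD Hder Hk; destruct (mvt_in D f f' c d) as [xi [Hxi ->]]; auto.
  apply Rmult_le_compat_r; [lra|auto].
Qed.

Lemma mvt_pos D f f' c d : c < d -> (forall x, c <= x <= d -> D x) ->
  (forall x, c <= x <= d -> deriv_in D f x (f' x)) -> (forall x, c < x < d -> 0 < f' x) ->
  f c < f d.
Proof.
  intros Hcd HD Hder Hk; destruct (mvt_in D f f' c d) as [xi [Hxi E]]; auto.
  assert (0 < f' xi * (d - c)) by (apply Rmult_lt_0_compat; auto; lra); lra.
Qed.

Lemma cont_in_extrema D f c d : c <= d -> (forall x, c <= x <= d -> D x) ->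
  (forall x, c <= x <= d -> cont_in D f x) ->
  (exists xm, c <= xm <= d /\ forall x, c <= x <= d -> f xm <= f x) /\
  (exists M, forall x, c <= x <= d -> f x <= M).
Proof.
  intros Hcd HD Hc; set (g := fun t => f (clamp c d t)).
  assert (Hg : forall t, c <= t <= d -> continuity_pt g t)
    by (intros; apply (continuity_pt_clamp D); auto).
  split.
  - destruct (continuity_ab_min g c d Hcd Hg) as [xm [Hm Hxm]]; exists xm; split; auto.
    intros x Hx; specialize (Hm x Hx); unfold g in Hm; rewrite !clamp_id in Hm; auto.
  - destruct (continuity_ab_maj g c d Hcd Hg) as [xM [HM _]]; exists (g xM); intros x Hx.
    specialize (HM x Hx); unfold g in HM; rewrite clamp_id in HM; auto.
Qed.

Lemma cont_in_first_nonpos D g c e : c < e -> (forall x, c <= x <= e -> D x) ->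
  (forall x, c <= x <= e -> cont_in D g x) -> 0 < g c -> g e <= 0 ->
  exists t0, c < t0 <= e /\ g t0 <= 0 /\ forall s, c <= s < t0 -> 0 < g s.
Proof.
  intros Hce HD Hc Hgc Hge.
  set (E := fun t => c <= t <= e /\ forall s, c <= s <= t -> 0 < g s).
  assert (Ec : E c) by (split; [lra|]; intros s Hs; replace s with c by lra; auto).
  destruct (completeness E) as [t0 [Hub Hlub]];
    [exists e; intros t [Ht _]; lra|exists c; exact Ec|].
  assert (Ht0c : c <= t0) by (apply Hub, Ec).
  assert (Ht0e : t0 <= e) by (apply Hlub; intros t [Ht _]; lra).
  assert (Hbefore : forall s, c <= s < t0 -> 0 < g s).
  { intros s Hs; destruct (Rlt_le_dec 0 (g s)) as [|Hneg]; auto.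
    assert (Hs_ub : is_upper_bound E s); [|specialize (Hlub s Hs_ub); lra].
    intros t [Ht Ht']; destruct (Rle_dec t s) as [|Hts]; auto.
    specialize (Ht' s ltac:(lra)); lra. }
  assert (Hz : g t0 <= 0).
  { apply Rnot_lt_le; intro Hpos.
    destruct (Hc t0 (conj Ht0c Ht0e) (g t0) Hpos) as [del [Hdel H']].
    destruct (Req_dec t0 e) as [He|He]; [subst; lra|].
    set (t1 := Rmin (t0 + del / 2) e).
    assert (t1 <= t0 + del / 2) by apply Rmin_l; assert (t1 <= e) by apply Rmin_r.
    assert (t0 < t1) by (apply Rmin_glb_lt; lra).
    assert (Et1 : E t1); [|specialize (Hub t1 Et1); lra].
    split; [lra|]; intros s Hs; destruct (Rlt_dec s t0); [apply Hbefore; lra|].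
    assert (Hsd : Rabs (s - t0) < del) by (rewrite Rabs_right; lra).
    specialize (H' s (HD s ltac:(lra)) Hsd); apply Rabs_def2 in H'; lra. }
  exists t0; repeat split; auto.
  destruct (Req_dec t0 c); [subst; lra|lra].
Qed.

(** * The first-order system z' = p / psi, p' = k z *)

Definition ode_system (D : R -> Prop) (psi k z p : R -> R) : Prop :=
  forall t, D t -> deriv_in D z t (p t / psi t) /\ deriv_in D p t (k t * z t).

Lemma ode_system_subset D E psi k z p :
  (forall t, E t -> D t) -> ode_system D psi k z p -> ode_system E psi k z p.
Proof.
  intros HE sys t Et; destruct (sys t (HE t Et)) as [dz dp].
  split; eapply deriv_in_subset; eauto.
Qed.

Lemma ode_system_reflect D psi k z p a :
  ode_system D psi k z p ->
  ode_system (fun t => D (a - t)) (fun t => psi (a - t)) (fun t => k (a - t))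
    (fun t => z (a - t)) (fun t => - p (a - t)).
Proof.
  intros sys t Dt; destruct (sys (a - t) Dt) as [dz dp]; split.
  - eapply deriv_in_val; [exact (deriv_in_reflect _ _ _ _ _ dz)|]; unfold Rdiv; ring.
  - eapply deriv_in_val;
      [apply (deriv_in_ext _ (fun t => -1 * p (a - t))); [exact Dt|intros; ring|]|].
    + exact (deriv_in_scal _ _ _ _ (-1) (deriv_in_reflect _ _ _ _ _ dp)).
    + ring.
Qed.

Section FirstOrderSystem.

Variables (c d : R) (psi : R -> R).
Hypothesis c_lt_d : c < d.
Hypothesis psi_pos : forall t, c <= t < d -> 0 < psi t.

Lemma ode_system_init_slope k z p v :
  ode_system (fun t => c <= t < d) psi k z p -> deriv_in (fun t => c <= t < d) z c v ->
  p c = v * psi c.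
Proof.
  intros sys slope; assert (Hpsi := psi_pos c ltac:(lra)).
  assert (E : p c / psi c = v).
  { apply (deriv_in_unique c ((c + d) / 2) z c); try lra;
      eapply deriv_in_subset; [|apply sys; lra| |exact slope]; intros; lra. }
  rewrite <- E; field; lra.
Qed.

Section PositiveCoefficient.

Variables (k z p : R -> R).
Hypothesis k_pos : forall t, c <= t < d -> 0 < k t.
Hypothesis sys : ode_system (fun t => c <= t < d) psi k z p.
Hypothesis z_init : 0 <= z c.
Hypothesis p_init : 0 < p c.

Lemma ode_system_p_pos t : c <= t < d -> 0 < p t.
Proof.
  intros Ht; destruct (Rlt_le_dec 0 (p t)) as [|Hle]; auto; exfalso.
  assert (Hct : c < t) by (destruct (Req_dec t c); [subst; lra|lra]).
  destruct (cont_in_first_nonpos (fun t => c <= t < d) p c t) as (t0 & Ht0 & Hpt0 & Hbefore);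
    auto; try (intros; cbv beta; lra).
  { intros x Hx; eapply deriv_in_cont; [|apply sys]; cbv beta; lra. }
  assert (z_pos : forall s, c < s <= t0 -> 0 < z s).
  { intros s Hs; apply Rle_lt_trans with (z c); auto.
    apply (mvt_pos (fun t => c <= t < d) z (fun t => p t / psi t)); try (intros; cbv beta; lra).
    - intros x Hx; apply sys; lra.
    - intros x Hx; apply Rdiv_lt_0_compat; [apply Hbefore|apply psi_pos]; lra. }
  assert (p c < p t0); [|lra].
  apply (mvt_pos (fun t => c <= t < d) p (fun t => k t * z t)); try (intros; cbv beta; lra).
  - intros x Hx; apply sys; lra.
  - intros x Hx; apply Rmult_lt_0_compat; [apply k_pos|apply z_pos]; lra.
Qed.

Lemma ode_system_increasing s t : c <= s < d -> c <= t < d -> s < t -> z s < z t.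
Proof.
  intros Hs Ht Hst; apply (mvt_pos (fun t => c <= t < d) z (fun t => p t / psi t));
    try (intros; cbv beta; lra).
  - intros x Hx; apply sys; lra.
  - intros x Hx; apply Rdiv_lt_0_compat; [apply ode_system_p_pos|apply psi_pos]; lra.
Qed.

Lemma ode_system_z_pos t : c < t < d -> 0 < z t.
Proof. intros Ht; apply Rle_lt_trans with (z c); auto; apply ode_system_increasing; lra. Qed.

End PositiveCoefficient.

Lemma ode_system_growth k z p s r kappa L M :
  ode_system (fun t => c <= t < d) psi k z p -> c <= s -> s < r -> r < d ->
  0 <= kappa -> 0 <= L -> (forall t, s <= t <= r -> kappa <= k t /\ L <= z t /\ psi t <= M) ->
  0 <= p s -> kappa * L * ((r - s) * (r - s)) / (4 * M) + z s <= z r.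
Proof.
  intros sys Hcs Hsr Hrd Hk HL Hb Hps.
  assert (HM : 0 < M) by (destruct (Hb r ltac:(lra)) as (_ & _ & ?); pose (psi_pos r); lra).
  assert (HkL : 0 <= kappa * L) by (apply Rmult_le_pos; auto).
  assert (p_lb : forall t, s <= t <= r -> kappa * L * (t - s) <= p t).
  { intros t Ht; destruct (Req_dec t s) as [->|Hts]; [lra|].
    assert (kappa * L * (t - s) <= p t - p s); [|lra].
    apply (mvt_lb (fun t => c <= t < d) p (fun t => k t * z t)); try (intros; cbv beta; lra).
    - intros x Hx; apply sys; lra.
    - intros x Hx; destruct (Hb x ltac:(lra)) as (? & ? & _); apply Rmult_le_compat; lra. }
  set (P := kappa * L * ((r - s) / 2)).
  assert (z_early : 0 * ((s + r) / 2 - s) <= z ((s + r) / 2) - z s).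
  { apply (mvt_lb (fun t => c <= t < d) z (fun t => p t / psi t)); try (intros; cbv beta; lra).
    - intros x Hx; apply sys; lra.
    - intros x Hx; assert (0 <= kappa * L * (x - s)) by (apply Rmult_le_pos; lra).
      specialize (p_lb x ltac:(lra)); assert (Hpsi := psi_pos x ltac:(lra)).
      unfold Rdiv; apply Rmult_le_pos; [lra|left; apply Rinv_0_lt_compat; lra]. }
  assert (z_late : P / M * (r - (s + r) / 2) <= z r - z ((s + r) / 2)).
  { apply (mvt_lb (fun t => c <= t < d) z (fun t => p t / psi t)); try (intros; cbv beta; lra).
    - intros x Hx; apply sys; lra.
    - intros x Hx; assert (Hpsi := psi_pos x ltac:(lra)).
      destruct (Hb x ltac:(lra)) as (_ & _ & HxM).
      assert (P <= kappa * L * (x - s)) by (unfold P; apply Rmult_le_compat_l; lra).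
      assert (P <= p x) by (specialize (p_lb x ltac:(lra)); lra).
      assert (0 <= P) by (unfold P; apply Rmult_le_pos; lra).
      apply Rle_trans with (P / psi x); unfold Rdiv.
      + apply Rmult_le_compat_l; [lra|apply Rinv_le_contravar; lra].
      + apply Rmult_le_compat_r; [left; apply Rinv_0_lt_compat|]; lra. }
  replace (kappa * L * ((r - s) * (r - s)) / (4 * M)) with (P / M * (r - (s + r) / 2))
    by (unfold P; field; lra).
  lra.
Qed.

Section Comparison.

Variables (kz ky z y pz py : R -> R).
Hypothesis k_lt : forall t, c <= t < d -> 0 < kz t < ky t.
Hypothesis sys_z : ode_system (fun t => c <= t < d) psi kz z pz.
Hypothesis sys_y : ode_system (fun t => c <= t < d) psi ky y py.
Hypothesis z_init : 0 <= z c.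
Hypothesis y_init : y c = z c.
Hypothesis pz_init : 0 < pz c.
Hypothesis py_init : py c = pz c.

Lemma ode_system_wronskian_pos t : c < t < d -> 0 < z t * py t - y t * pz t.
Proof.
  intros Ht; replace 0 with (z c * py c - y c * pz c) by (rewrite y_init, py_init; ring).
  apply (mvt_pos (fun t => c <= t < d) (fun t => z t * py t - y t * pz t)
           (fun t => z t * y t * (ky t - kz t)));
    try (intros; cbv beta; lra).
  - intros x Hx; destruct (sys_z x ltac:(lra)) as [dz dpz].
    destruct (sys_y x ltac:(lra)) as [dy dpy].
    assert (Hpsi := psi_pos x ltac:(lra)).
    eapply deriv_in_val; [apply deriv_in_minus; apply deriv_in_mult; eauto; cbv beta; lra|].
    field; lra.
  - intros x Hx; assert (Hkx := k_lt x ltac:(lra)).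
    assert (0 < z x) by (apply (ode_system_z_pos kz z pz); auto; [apply k_lt|lra]).
    assert (0 < y x).
    { apply (ode_system_z_pos ky y py); auto; try lra.
      intros u Hu; specialize (k_lt u Hu); lra. }
    repeat apply Rmult_lt_0_compat; lra.
Qed.

Lemma ode_system_compare t : c < t < d -> z t < y t.
Proof.
  assert (z_pos : forall t, c < t < d -> 0 < z t)
    by (apply (ode_system_z_pos kz z pz); auto; apply k_lt).
  assert (ratio_incr : forall s r, c < s < r -> r < d -> y s / z s < y r / z r).
  { intros s r Hs Hr.
    apply (mvt_pos (fun t => c < t < d) (fun t => y t / z t)
             (fun t => (z t * py t - y t * pz t) / (psi t * (z t * z t))));
      try (intros; cbv beta; lra).
    - intros x Hx; assert (Hzx := z_pos x ltac:(lra)); assert (Hpsi := psi_pos x ltac:(lra)).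
      destruct (sys_z x ltac:(lra)) as [dz _]; destruct (sys_y x ltac:(lra)) as [dy _].
      apply (deriv_in_subset _ (fun t => c < t < d)) in dz, dy; try (intros; lra).
      eapply deriv_in_val;
        [apply deriv_in_div;
           [cbv beta; lra|intros u Hu; apply Rgt_not_eq, z_pos, Hu|exact dy|exact dz]|].
      field; lra.
    - intros x Hx; assert (Hzx := z_pos x ltac:(lra)); assert (Hpsi := psi_pos x ltac:(lra)).
      apply Rdiv_lt_0_compat; [apply ode_system_wronskian_pos; lra|].
      apply Rmult_lt_0_compat; [|apply Rmult_lt_0_compat]; lra. }
  intros Ht; apply Rnot_le_lt; intro Hyz.
  set (s := (c + t) / 2); set (lam := y s / z s).
  assert (Hzt := z_pos t Ht); assert (Hzs := z_pos s ltac:(unfold s; lra)).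
  assert (lam_lt_1 : lam < 1).
  { assert (lam < y t / z t) by (apply ratio_incr; unfold s; lra).
    assert (y t / z t <= 1); [|lra].
    apply (Rmult_le_reg_r (z t)); [lra|]; unfold Rdiv; rewrite Rmult_assoc, Rinv_l; lra. }
  assert (below : forall u, c < u < c + (s - c) -> y u - y c <= lam * z u - lam * z c).
  { intros u Hu; assert (Hzu := z_pos u ltac:(unfold s in *; lra)).
    assert (Hratio : y u / z u < lam) by (apply ratio_incr; unfold s in *; lra).
    assert (y u < lam * z u).
    { apply (Rmult_lt_compat_r (z u)) in Hratio; [|lra].
      unfold Rdiv in Hratio; rewrite Rmult_assoc, Rinv_l in Hratio; lra. }
    assert (0 <= (1 - lam) * z c) by (apply Rmult_le_pos; lra).
    rewrite y_init; lra. }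
  assert (slope_le : py c / psi c <= lam * (pz c / psi c)).
  { apply (deriv_in_le_right (fun t => c <= t < d) y (fun t => lam * z t) c (s - c));
      try (intros; cbv beta; unfold s in *; lra);
      [apply sys_y; lra|apply deriv_in_scal, sys_z; lra|exact below]. }
  rewrite py_init in slope_le; assert (Hpsi := psi_pos c ltac:(lra)).
  assert (0 < pz c / psi c) by (apply Rdiv_lt_0_compat; lra).
  nra.
Qed.

End Comparison.

End FirstOrderSystem.

Section ParameterFamily.

Variables (c d Bbar z0 m M : R) (psi q : R -> R) (z : R -> R -> R).
Hypothesis c_lt_d : c < d.
Hypothesis m_pos : 0 < m.
Hypothesis psi_bounds : forall t, c <= t < d -> m <= psi t <= M.
Hypothesis q_bound : forall t, c <= t < d -> Rabs (q t) <= Bbar.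
Hypothesis z0_nonneg : 0 <= z0.
Hypothesis family : forall B, Bbar < B ->
  z c B = z0 /\ exists p, p c = psi c /\
    ode_system (fun t => c <= t < d) psi (fun t => psi t * (B - q t)) (fun t => z t B) p.

Lemma psi_pos_of_bounds t : c <= t < d -> 0 < psi t.
Proof. intros Ht; specialize (psi_bounds t Ht); lra. Qed.

Lemma coefficient_lower_bound B t : Bbar < B -> c <= t < d -> m * (B - Bbar) <= psi t * (B - q t).
Proof.
  intros HB Ht; destruct (psi_bounds t Ht); specialize (q_bound t Ht).
  pose proof (Rle_abs (q t)); apply Rmult_le_compat; lra.
Qed.

Lemma coefficient_pos B t : Bbar < B -> c <= t < d -> 0 < psi t * (B - q t).
Proof.
  intros HB Ht; apply Rlt_le_trans with (m * (B - Bbar));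
    [apply Rmult_lt_0_compat; lra|apply coefficient_lower_bound; auto].
Qed.

Lemma family_increasing B : Bbar < B ->
  forall s t, c <= s < d -> c <= t < d -> s < t -> z s B < z t B.
Proof.
  intros HB; destruct (family B HB) as (Hz0 & p & Hp0 & sys).
  apply (ode_system_increasing c d psi psi_pos_of_bounds
           (fun t => psi t * (B - q t)) (fun t => z t B) p); auto.
  - intros t Ht; apply coefficient_pos; auto.
  - rewrite Hz0; lra.
  - rewrite Hp0; apply psi_pos_of_bounds; lra.
Qed.

Lemma family_increasing_in_B r : c < r < d ->
  forall B B', Bbar < B -> B < B' -> z r B < z r B'.
Proof.
  intros Hr B B' HB HBB'.
  destruct (family B HB) as (Hz0 & p & Hp0 & sys).
  destruct (family B' ltac:(lra)) as (Hz0' & p' & Hp0' & sys').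
  apply (ode_system_compare c d psi c_lt_d psi_pos_of_bounds
           (fun t => psi t * (B - q t)) (fun t => psi t * (B' - q t))
           (fun t => z t B) (fun t => z t B') p p'); auto; try congruence.
  - intros t Ht; split; [apply coefficient_pos; auto|].
    assert (Hpsi := psi_pos_of_bounds t Ht); nra.
  - rewrite Hp0; apply psi_pos_of_bounds; lra.
Qed.

Lemma family_unbounded r : c < r < d ->
  forall N, exists B0, forall B, B0 < B -> Bbar < B -> N < z r B.
Proof.
  intros Hr N.
  set (s := (c + r) / 2); set (L := z s (Bbar + 1)).
  assert (HL : 0 < L).
  { destruct (family (Bbar + 1) ltac:(lra)) as (Hz0 & _).
    assert (0 <= z c (Bbar + 1)) by (rewrite Hz0; exact z0_nonneg).
    unfold L; pose proof (family_increasing (Bbar + 1) ltac:(lra) c s); unfold s in *; lra. }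
  assert (HM : 0 < M) by (destruct (psi_bounds r ltac:(lra)); lra).
  set (K := m * L * ((r - s) * (r - s)) / (4 * M)).
  assert (HK : 0 < K).
  { unfold K, s; apply Rdiv_lt_0_compat; [|lra].
    repeat apply Rmult_lt_0_compat; lra. }
  exists (Bbar + 1 + Rabs N / K); intros B HB0 HB.
  assert (Hquot : 0 <= Rabs N / K)
    by (unfold Rdiv; apply Rmult_le_pos; [apply Rabs_pos|left; apply Rinv_0_lt_compat; auto]).
  destruct (family B HB) as (Hz0 & p & Hp0 & sys).
  assert (z_large : forall t, s <= t <= r -> L <= z t B).
  { intros t Ht; apply Rle_trans with (z s B).
    - left; apply family_increasing_in_B; unfold s; lra.
    - destruct (Req_dec t s) as [->|]; [lra|]; left; apply family_increasing; unfold s in *; lra. }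
  assert (Hps : 0 < p s).
  { apply (ode_system_p_pos c d psi psi_pos_of_bounds
             (fun t => psi t * (B - q t)) (fun t => z t B) p); auto;
      [intros; apply coefficient_pos; auto|rewrite Hz0; lra
      |rewrite Hp0; apply psi_pos_of_bounds; lra|unfold s; lra]. }
  assert (growth : m * (B - Bbar) * L * ((r - s) * (r - s)) / (4 * M) + z s B <= z r B).
  { apply (ode_system_growth c d psi psi_pos_of_bounds
             (fun t => psi t * (B - q t)) (fun t => z t B) p); auto; unfold s in *; try lra.
    - apply Rmult_le_pos; lra.
    - intros t Ht; repeat split; [apply coefficient_lower_bound| |apply psi_bounds]; auto; lra. }
  assert (K * (B - Bbar) <= z r B).
  { replace (K * (B - Bbar)) with (m * (B - Bbar) * L * ((r - s) * (r - s)) / (4 * M))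
      by (unfold K; field; lra).
    pose proof (z_large s ltac:(unfold s; lra)); lra. }
  assert (Rabs N < K * (B - Bbar)).
  { assert (Hq : Rabs N / K < B - Bbar) by lra.
    apply (Rmult_lt_compat_l K) in Hq; [|lra].
    unfold Rdiv in Hq; rewrite <- Rmult_assoc, Rinv_r_simpl_m in Hq; lra. }
  pose proof (Rle_abs N); lra.
Qed.

Lemma family_properties :
  (forall B, Bbar < B -> forall s t, c <= s < d -> c <= t < d -> s < t -> z s B < z t B) /\
  (forall r, c < r < d -> forall B B', Bbar < B -> B < B' -> z r B < z r B') /\
  (forall r, c < r < d -> forall N, exists B0, forall B, B0 < B -> Bbar < B -> N < z r B).
Proof.
  split; [exact family_increasing|split; [exact family_increasing_in_B|exact family_unbounded]].
Qed.

End ParameterFamily.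

(** * The two boundary value problems *)

Section BoundaryProblems.

Variables (a Bbar : R) (psi dpsi d2psi dq : R -> R).
Hypothesis a_pos : 0 < a.
Hypothesis psi_C2 : C2_on (fun r => 0 <= r <= a) psi dpsi d2psi.
Hypothesis psi_pos : forall r, 0 <= r <= a -> 0 < psi r.
Hypothesis dq_deriv : forall r, 0 <= r <= a ->
  deriv_in (fun t => 0 <= t <= a) (fun t => dpsi t / psi t) r (dq r).
Hypothesis dq_bound : forall r, 0 <= r <= a -> Rabs (dq r) <= Bbar.

Lemma solves_ode_ode_system B D z : (forall t, D t -> 0 <= t <= a) ->
  solves_ode psi B D z -> exists p, ode_system D psi (fun t => psi t * (B - dq t)) z p.
Proof.
  intros HD [w sol]; exists (fun t => w t - dpsi t * z t); intros r Dr.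
  assert (Hr := HD r Dr); assert (Hpsi := psi_pos r Hr).
  assert (psi_nz : forall y, D y -> psi y <> 0)
    by (intros y Dy; specialize (psi_pos y (HD y Dy)); lra).
  destruct (psi_C2 r Hr) as [dpsi_r [d2psi_r _]].
  apply (deriv_in_subset _ D) in dpsi_r, d2psi_r; auto.
  destruct (sol r Dr) as [dw dquot].
  assert (dz : deriv_in D z r ((w r - dpsi r * z r) / psi r)).
  { apply (deriv_in_ext D (fun t => psi t * z t / psi t)); auto; [intros; field; auto|].
    eapply deriv_in_val; [apply deriv_in_div; eauto|]; cbv beta; field; lra. }
  split; auto.
  assert (dq_r : dq r = (d2psi r * psi r - dpsi r * dpsi r) / (psi r * psi r)).
  { apply (deriv_in_unique 0 a (fun t => dpsi t / psi t) r); auto.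
    apply deriv_in_div; auto;
      try (intros y Hy; specialize (psi_pos y Hy); lra); apply psi_C2; auto. }
  assert (dw' : deriv_in D w r (B * z r * psi r + w r / psi r * dpsi r)).
  { apply (deriv_in_ext D (fun t => w t / psi t * psi t)); auto; [intros; field; auto|].
    apply (deriv_in_mult D (fun t => w t / psi t)); auto. }
  eapply deriv_in_val; [apply deriv_in_minus; [exact dw'|apply deriv_in_mult; eauto]|].
  rewrite dq_r; field; lra.
Qed.

Lemma psi_bounds : exists m M, 0 < m /\ forall r, 0 <= r <= a -> m <= psi r <= M.
Proof.
  destruct (cont_in_extrema (fun t => 0 <= t <= a) psi 0 a) as [[xm [Hxm Hmin]] [M HM]];
    auto; try lra.
  - intros x Hx; destruct (psi_C2 x Hx) as [Hd _]; eapply deriv_in_cont; eauto.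
  - exists (psi xm), M; split; auto.
Qed.

Section LeftProblem.

Variables (R1 : R) (z1 : R -> R -> R).
Hypothesis R1_pos : 0 < R1.
Hypothesis R1_le_a : R1 <= a.
Hypothesis z1_solves : forall B, Bbar < B ->
  solves_ode psi B (fun r => 0 <= r < R1) (fun r => z1 r B) /\ z1 0 B = 0 /\
  deriv_in (fun r => 0 <= r < R1) (fun r => z1 r B) 0 1.

Lemma z1_family B : Bbar < B ->
  z1 0 B = 0 /\ exists p, p 0 = psi 0 /\
    ode_system (fun t => 0 <= t < R1) psi (fun t => psi t * (B - dq t)) (fun t => z1 t B) p.
Proof.
  intros HB; destruct (z1_solves B HB) as (sol & Hz0 & slope); split; auto.
  destruct (solves_ode_ode_system B (fun r => 0 <= r < R1) _ ltac:(intros; cbv beta in *; lra) sol)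
    as [p sys].
  exists p; split; auto.
  rewrite (ode_system_init_slope 0 R1 psi R1_pos ltac:(intros; apply psi_pos; lra) _ _ p 1
             sys slope).
  ring.
Qed.

Lemma z1_properties :
  (forall B, Bbar < B -> forall r, 0 < r < R1 -> 0 < z1 r B) /\
  (forall B, Bbar < B -> forall r s, 0 <= r < R1 -> 0 <= s < R1 -> r < s -> z1 r B < z1 s B) /\
  (forall r, 0 < r < R1 -> forall B B', Bbar < B -> B < B' -> z1 r B < z1 r B') /\
  (forall r, 0 < r < R1 -> forall N, exists B0, forall B, B0 < B -> Bbar < B -> N < z1 r B).
Proof.
  destruct psi_bounds as (m & M & m_pos & bounds).
  destruct (family_properties 0 R1 Bbar 0 m M psi dq z1) as (incr & incr_B & unbounded);
    auto; try lra; [intros; apply bounds; lra|intros; apply dq_bound; lra|exact z1_family|].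
  split; [|split; [exact incr|split; [exact incr_B|exact unbounded]]].
  intros B HB r Hr; rewrite <- (proj1 (z1_family B HB)); apply incr; auto; lra.
Qed.

End LeftProblem.

Section RightProblem.

Variables (R2 beta : R) (z2 : R -> R -> R).
Hypothesis R2_nonneg : 0 <= R2.
Hypothesis R2_lt_a : R2 < a.
Hypothesis beta_pos : 0 < beta.
Hypothesis z2_solves : forall B, Bbar < B ->
  solves_ode psi B (fun r => R2 < r <= a) (fun r => z2 r B) /\ z2 a B = beta /\
  deriv_in (fun r => R2 < r <= a) (fun r => z2 r B) a (-1).

Lemma z2_reflected_family B : Bbar < B ->
  z2 (a - 0) B = beta /\ exists p, p 0 = psi (a - 0) /\
    ode_system (fun t => 0 <= t < a - R2) (fun t => psi (a - t))
      (fun t => psi (a - t) * (B - dq (a - t))) (fun t => z2 (a - t) B) p.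
Proof.
  intros HB; destruct (z2_solves B HB) as (sol & Hza & slope).
  destruct (solves_ode_ode_system B (fun r => R2 < r <= a) _ ltac:(intros; cbv beta in *; lra) sol)
    as [p sys].
  apply (ode_system_reflect _ _ _ _ _ a), (ode_system_subset _ (fun t => 0 <= t < a - R2)) in sys;
    [|intros; lra].
  assert (slope' : deriv_in (fun t => 0 <= t < a - R2) (fun t => z2 (a - t) B) 0 (- -1)).
  { apply (deriv_in_subset (fun t => R2 < a - t <= a)); [intros; lra|].
    assert (refl := deriv_in_reflect (fun r => R2 < r <= a) (fun r => z2 r B) a 0 (-1)).
    rewrite Rminus_0_r in refl; exact (refl slope). }
  assert (Hp0 := ode_system_init_slope 0 (a - R2) (fun t => psi (a - t)) ltac:(lra)
                   ltac:(intros; apply psi_pos; lra) _ _ _ _ sys slope').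
  rewrite Rminus_0_r; split; auto.
  exists (fun t => - p (a - t)); split; auto.
  cbv beta in Hp0 |- *; rewrite Rminus_0_r in Hp0 |- *; lra.
Qed.

Lemma z2_properties :
  (forall B, Bbar < B -> forall r, R2 < r < a -> beta < z2 r B) /\
  (forall B, Bbar < B -> forall r s, R2 < r < a -> R2 < s < a -> r < s -> z2 s B < z2 r B) /\
  (forall r, R2 < r < a -> forall B B', Bbar < B -> B < B' -> z2 r B < z2 r B') /\
  (forall r, R2 < r < a -> forall N, exists B0, forall B, B0 < B -> Bbar < B -> N < z2 r B).
Proof.
  destruct psi_bounds as (m & M & m_pos & bounds).
  destruct (family_properties 0 (a - R2) Bbar beta m M (fun t => psi (a - t)) (fun t => dq (a - t))
              (fun t B => z2 (a - t) B)) as (incr & incr_B & unbounded);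
    auto; try lra;
    [intros; apply bounds; lra|intros; apply dq_bound; lra|exact z2_reflected_family|].
  assert (reflect : forall r B, z2 r B = z2 (a - (a - r)) B) by (intros; f_equal; ring).
  split; [|split; [|split]].
  - intros B HB r Hr; rewrite <- (proj1 (z2_reflected_family B HB)), (reflect r B).
    apply incr; auto; lra.
  - intros B HB r s Hr Hs Hrs; rewrite (reflect r B), (reflect s B); apply incr; auto; lra.
  - intros r Hr B B' HB HBB'; rewrite (reflect r B), (reflect r B'); apply incr_B; auto; lra.
  - intros r Hr N; destruct (unbounded (a - r) ltac:(lra) N) as [B0 HB0].
    exists B0; intros B HB0' HB; rewrite (reflect r B); auto.
Qed.

End RightProblem.

End BoundaryProblems.

Theorem lemma5p4
  (a : R) (psi dpsi d2psi dq : R -> R) (R1 R2 beta Bbar : R)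
  (z1 z2 : R -> R -> R) :
  0 < a ->
  C2_on (fun r => 0 <= r <= a) psi dpsi d2psi ->
  (forall r, 0 <= r <= a -> 0 < psi r) ->
  0 < R1 -> R1 < R2 -> R2 < a ->
  0 < beta ->
  (* dq = (psi'/psi)' on [0,a] *)
  (forall r, 0 <= r <= a ->
     deriv_in (fun t => 0 <= t <= a) (fun t => dpsi t / psi t) r (dq r)) ->
  (* Bbar = max_{[0,a]} |(psi'/psi)'| *)
  (forall r, 0 <= r <= a -> Rabs (dq r) <= Bbar) ->
  (exists r, 0 <= r <= a /\ Rabs (dq r) = Bbar) ->
  (* z1(., B) solves the problem on [0,R1) *)
  (forall B, Bbar < B ->
     solves_ode psi B (fun r => 0 <= r < R1) (fun r => z1 r B) /\
     z1 0 B = 0 /\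
     deriv_in (fun r => 0 <= r < R1) (fun r => z1 r B) 0 1) ->
  (* z2(., B) solves the problem on (R2,a] *)
  (forall B, Bbar < B ->
     solves_ode psi B (fun r => R2 < r <= a) (fun r => z2 r B) /\
     z2 a B = beta /\
     deriv_in (fun r => R2 < r <= a) (fun r => z2 r B) a (-1)) ->
  (* (i) *)
  (forall B, Bbar < B -> forall r, 0 < r < R1 -> 0 < z1 r B) /\
  (* (ii) *)
  (forall B, Bbar < B -> forall r s, 0 <= r < R1 -> 0 <= s < R1 -> r < s ->
     z1 r B < z1 s B) /\
  (* (iii) *)
  (forall r, 0 < r < R1 -> forall B B', Bbar < B -> B < B' -> z1 r B < z1 r B') /\
  (* (iv) *)
  (forall r, 0 < r < R1 -> forall M, exists B0, forall B, B0 < B -> Bbar < B ->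
     M < z1 r B) /\
  (* (i') *)
  (forall B, Bbar < B -> forall r, R2 < r < a -> beta < z2 r B) /\
  (* (ii') *)
  (forall B, Bbar < B -> forall r s, R2 < r < a -> R2 < s < a -> r < s ->
     z2 s B < z2 r B) /\
  (* (iii') *)
  (forall r, R2 < r < a -> forall B B', Bbar < B -> B < B' -> z2 r B < z2 r B') /\
  (* (iv') *)
  (forall r, R2 < r < a -> forall M, exists B0, forall B, B0 < B -> Bbar < B ->
     M < z2 r B).
Proof.
  intros Ha HC Hpos HR1 HR12 HR2a Hbeta Hdq Hb _ Hz1 Hz2.
  destruct (z1_properties a Bbar psi dpsi d2psi dq Ha HC Hpos Hdq Hb R1 z1 HR1 ltac:(lra) Hz1)
    as (left_i & left_ii & left_iii & left_iv).
  destruct (z2_properties a Bbar psi dpsi d2psi dq Ha HC Hpos Hdq Hb R2 beta z2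
              ltac:(lra) HR2a Hbeta Hz2)
    as (right_i & right_ii & right_iii & right_iv).
  repeat split; assumption.
Qed.
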